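(* Consider a human–algorithm system (as defined in the context) whose combining function $c$ is convex as a function of $(a,h)\in[0,\infty)^2$. Then the system does not exhibit complementarity.
   Context: A human–algorithm system consists of: an integer $N\ge1$ (number of regimes); probabilities $p_1,\dots,p_N\ge 0$ with $\sum_i p_i=1$; algorithmic losses $a_1,\dots,a_N\ge 0$ and unaided-human losses $h_1,\dots,h_N\ge0$; and a combining function $c:[0,\infty)^2\to\mathbb{R}$ satisfying $\min(a,h)\le c(a,h)\le\max(a,h)$ for all $a,h\ge0$, where $c(a_i,h_i)$ is the loss of the combined system in regime $i$. Write $A=\sum_i p_i a_i$ and $H=\sum_i p_i h_i$. The system exhibits complementarity if $\sum_{i=1}^N p_i\,c(a_i,h_i)<\min(A,H)$. *)

From mathcomp Require Import all_boot all_order all_algebra.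
Set Implicit Arguments. Unset Strict Implicit. Unset Printing Implicit Defensive.
Import Order.TTheory GRing.Theory Num.Theory.
Local Open Scope ring_scope.

Definition convex_on_nonneg_quadrant (R : realFieldType) (c : R -> R -> R) : Prop :=
  forall a1 h1 a2 h2 t : R,
    0 <= a1 -> 0 <= h1 -> 0 <= a2 -> 0 <= h2 -> 0 <= t -> t <= 1 ->
    c (t * a1 + (1 - t) * a2) (t * h1 + (1 - t) * h2)
      <= t * c a1 h1 + (1 - t) * c a2 h2.

Definition combining_fun (R : realFieldType) (c : R -> R -> R) : Prop :=
  forall a h : R, 0 <= a -> 0 <= h ->
    Num.min a h <= c a h /\ c a h <= Num.max a h.

Definition complementarity (R : realFieldType) (N : nat) (p a h : 'I_N -> R)
  (c : R -> R -> R) : Prop :=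
  \sum_(i < N) p i * c (a i) (h i)
    < Num.min (\sum_(i < N) p i * a i) (\sum_(i < N) p i * h i).

(* A convex combining function satisfies Jensen's inequality, so the expected
   loss of the combined system is at least c(A, H), the combined loss at the
   average losses; since c lies between the minimum and the maximum of its
   arguments, c(A, H) >= min(A, H), which rules out complementarity. *)
From mathcomp Require Import all_boot all_order all_algebra.
From mathcomp Require Import ring.
Set Implicit Arguments. Unset Strict Implicit. Unset Printing Implicit Defensive.
Import Order.TTheory GRing.Theory Num.Theory.
Local Open Scope ring_scope.

Lemma sumr_wmul_eq0 (R : numDomainType) (I : eqType) (s : seq I) (w f : I -> R) :
  (forall i, 0 <= w i) -> \sum_(i <- s) w i = 0 -> \sum_(i <- s) w i * f i = 0.
Proof.
move=> w_ge0 /eqP; rewrite psumr_eq0 // => /allP w_eq0.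
rewrite big_seq big1 // => i /w_eq0 /eqP ->; exact: mul0r.
Qed.

Section ConvexQuadrant.

Variables (R : realFieldType) (c : R -> R -> R).
Hypothesis c_convex : convex_on_nonneg_quadrant c.

Lemma convex_quadrant_weighted (u v a1 h1 a2 h2 : R) :
  0 <= u -> 0 < v -> 0 <= a1 -> 0 <= h1 -> 0 <= a2 -> 0 <= h2 ->
  (u + v) * c ((u * a1 + v * a2) / (u + v)) ((u * h1 + v * h2) / (u + v))
    <= u * c a1 h1 + v * c a2 h2.
Proof.
move=> u_ge0 v_gt0 a1_ge0 h1_ge0 a2_ge0 h2_ge0.
have uv_gt0 : 0 < u + v by rewrite ltr_wpDl.
have uv_neq0 : u + v != 0 by rewrite gt_eqF.
set t := u / (u + v).
have t_ge0 : 0 <= t by rewrite divr_ge0 // ltW.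
have t_le1 : t <= 1 by rewrite ler_pdivrMr // mul1r lerDl ltW.
have t_compl : 1 - t = v / (u + v) by rewrite /t; field.
have mix x1 x2 : t * x1 + (1 - t) * x2 = (u * x1 + v * x2) / (u + v).
  by rewrite t_compl /t; field.
have := c_convex a1_ge0 h1_ge0 a2_ge0 h2_ge0 t_ge0 t_le1.
rewrite !mix => /(ler_wpM2l (ltW uv_gt0)) /le_trans; apply.
by rewrite mulrC divfK.
Qed.

Lemma jensen_convex_quadrant (I : eqType) (s : seq I) (w a h : I -> R) :
  (forall i, 0 <= w i) -> (forall i, 0 <= a i) -> (forall i, 0 <= h i) ->
  0 < \sum_(i <- s) w i ->
  (\sum_(i <- s) w i) * c ((\sum_(i <- s) w i * a i) / \sum_(i <- s) w i)
                         ((\sum_(i <- s) w i * h i) / \sum_(i <- s) w i)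
    <= \sum_(i <- s) w i * c (a i) (h i).
Proof.
move=> w_ge0 a_ge0 h_ge0; elim: s => [|x s IHs]; first by rewrite big_nil ltxx.
rewrite !big_cons.
set W := \sum_(i <- s) w i; set A := \sum_(i <- s) w i * a i.
set H := \sum_(i <- s) w i * h i; set C := \sum_(i <- s) w i * c (a i) (h i).
have W_ge0 : 0 <= W by apply: sumr_ge0.
have [W_eq0 | W_neq0] := eqVneq W 0.
  rewrite /A /H /C !sumr_wmul_eq0 // W_eq0 !addr0 => wx_gt0.
  by rewrite !(mulrC (w x)) !mulfK ?gt_eqF.
have W_gt0 : 0 < W by rewrite lt_def W_neq0.
have A_ge0 : 0 <= A by apply: sumr_ge0 => i _; apply: mulr_ge0.
have H_ge0 : 0 <= H by apply: sumr_ge0 => i _; apply: mulr_ge0.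
have avg_scale x' : W * (x' / W) = x' by rewrite mulrC divfK.
move=> _; have := convex_quadrant_weighted (w_ge0 x) W_gt0 (a_ge0 x) (h_ge0 x)
  (divr_ge0 A_ge0 W_ge0) (divr_ge0 H_ge0 W_ge0).
rewrite !avg_scale => /le_trans; apply.
by rewrite lerD2l; apply: IHs.
Qed.

End ConvexQuadrant.

Theorem lemma4 (R : realFieldType) (N : nat) (p a h : 'I_N -> R)
  (c : R -> R -> R) :
  (0 < N)%N ->
  (forall i, 0 <= p i) -> \sum_(i < N) p i = 1 ->
  (forall i, 0 <= a i) -> (forall i, 0 <= h i) ->
  combining_fun c ->
  convex_on_nonneg_quadrant c ->
  ~ complementarity p a h c.
Proof.
move=> _ p_ge0 p_sum1 a_ge0 h_ge0 c_comb c_convex.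
have jensen := jensen_convex_quadrant c_convex (s := index_enum 'I_N) p_ge0 a_ge0 h_ge0.
rewrite p_sum1 ltr01 !divr1 mul1r in jensen.
have A_ge0 : 0 <= \sum_(i < N) p i * a i by apply: sumr_ge0 => i _; apply: mulr_ge0.
have H_ge0 : 0 <= \sum_(i < N) p i * h i by apply: sumr_ge0 => i _; apply: mulr_ge0.
have [min_le_c _] := c_comb _ _ A_ge0 H_ge0.
by apply/negP; rewrite -leNgt (le_trans min_le_c (jensen isT)).
Qed.
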